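(* For all $\mathcal S,\mathcal S'\in\mathrm{TP}(n)$, $K_{\mathcal S}\cap K_{\mathcal S'}=K_{\mathcal S\cap\mathcal S'}$.
   Context: A rooted tree on leaf set $[n]$ has leaves labeled bijectively by $[n]$ and internal vertices each with at least two children; a clade is the set of leaves below an internal vertex, and $\mathrm{clade}(T)$ is the set of clades (including $[n]$). $\mathrm{TP}(n)$ is the collection of sets of the form $\mathrm{clade}(T_1)\cup\mathrm{clade}(T_2)$ for rooted trees $T_1,T_2$ on leaf set $[n]$. For a family $\mathcal S\subseteq 2^{[n]}$, $\mathcal S^\circ=\mathcal S\setminus\{[n]\}$, and $K_{\mathcal S}=\mathbb{R}(1,\dots,1)^T+\mathrm{cone}\{-v_C: C\in\mathcal S^\circ\}\subseteq\mathbb{R}^{\binom{[n]}{2}}$, where $v_C$ is the characteristic vector of the set $\binom{C}{2}$ of pairs contained in $C$. *)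

From HB Require Import structures.
From mathcomp Require Import all_boot all_order all_algebra.
From mathcomp Require Import reals.
Set Implicit Arguments. Unset Strict Implicit. Unset Printing Implicit Defensive.
Import Order.TTheory GRing.Theory Num.Theory.
Local Open Scope ring_scope.

(* Rooted trees with leaves labelled by naturals (leaf i stands for i+1 in [n]).
   An internal vertex is a [Node] with its list of children. *)
Inductive rtree := Leaf of nat | Node of seq rtree.

Fixpoint leaves (t : rtree) : seq nat :=
  match t with
  | Leaf i => [:: i]
  | Node ts => (fix lvs (us : seq rtree) : seq nat :=
                  match us with [::] => [::] | u :: us' => leaves u ++ lvs us' end) ts
  end.

Fixpoint internal_ok (t : rtree) : bool :=
  match t with
  | Leaf _ => true
  | Node ts => (1 < size ts)%N &&
               (fix ok (us : seq rtree) : bool :=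
                  match us with [::] => true | u :: us' => internal_ok u && ok us' end) ts
  end.

Definition is_tree (n : nat) (t : rtree) : bool :=
  internal_ok t && perm_eq (leaves t) (iota 0 n).

Definition leafset (n : nat) (t : rtree) : {set 'I_n} :=
  [set i : 'I_n | nat_of_ord i \in leaves t].

Fixpoint clade_seq (n : nat) (t : rtree) : seq {set 'I_n} :=
  match t with
  | Leaf _ => [::]
  | Node ts => leafset n t ::
               (fix cs (us : seq rtree) : seq {set 'I_n} :=
                  match us with [::] => [::] | u :: us' => clade_seq n u ++ cs us' end) ts
  end.

Definition clade (n : nat) (t : rtree) : {set {set 'I_n}} :=
  setT |: [set C in clade_seq n t].

Definition TP (n : nat) (S : {set {set 'I_n}}) : Prop :=
  exists T1 T2 : rtree, [/\ is_tree n T1, is_tree n T2 & S = clade n T1 :|: clade n T2].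

(* coordinates of R^{binom([n],2)} are indexed by 2-element subsets of 'I_n *)
Definition is_pair (n : nat) (p : {set 'I_n}) : bool := #|p| == 2%N.

Definition vC (R : realType) (n : nat) (C : {set 'I_n}) (p : {set 'I_n}) : R :=
  if p \subset C then 1 else 0.

Definition Sint (n : nat) (S : {set {set 'I_n}}) : {set {set 'I_n}} := S :\ setT.

(* x ∈ K_S = R(1,...,1) + cone{ -v_C : C ∈ S° } *)
Definition inK (R : realType) (n : nat) (S : {set {set 'I_n}}) (x : {set 'I_n} -> R)
  : Prop :=
  exists (t : R) (lam : {set 'I_n} -> R),
    (forall C, C \in Sint S -> 0 <= lam C) /\
    forall p, is_pair p -> x p = t - \sum_(C in Sint S) lam C * vC R C p.

From HB Require Import structures.
From mathcomp Require Import all_boot all_order all_algebra.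
From mathcomp Require Import reals.
Set Implicit Arguments. Unset Strict Implicit. Unset Printing Implicit Defensive.
Import Order.TTheory GRing.Theory Num.Theory.

(* A family S in TP(n) is the union of two laminar families, the clades of two
   trees.  Hence every Y with |Y| >= 2 contains a pair p such that every member
   of S containing p contains Y: for a laminar family, "lying together in a
   member that misses part of Y" is an equivalence relation with at least two
   classes on Y, and two such relations always leave some pair of Y unrelated
   in both.  Writing x = t - sum_C lam_C v_C, the number t - sum_{C ⊇ Y} lam_C
   is therefore the maximum of x over the pairs inside Y, so it depends on x
   only.  Comparing representations of x for S and S' at Y = [n] gives the
   same t, and then equal superset sums for every |Y| >= 2; Möbius inversion
   gives lam_C = lam'_C whenever |C| >= 2, so lam vanishes on the members of
   S \ S' that contain a pair and x lies in K_{S ∩ S'}.  The converse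
   inclusion is the monotonicity of K_S in S. *)

Definition laminar (T : finType) (pT : predType {set T}) (A : pT) :=
  {in A &, forall (C D : {set T}) i, i \in C -> i \in D -> (C \subset D) || (D \subset C)}.

Definition laminar_within (T : finType) (L : {set T}) (F : seq {set T}) :=
  {in F, forall C : {set T}, C \subset L} /\ laminar F.

Lemma laminar_within_cons (T : finType) (L : {set T}) F :
  laminar_within L F -> laminar_within L (L :: F).
Proof.
move=> [FL lamF]; split=> [C | C D]; first by rewrite inE => /predU1P[-> | /FL].
rewrite !inE => /predU1P[-> | CF] /predU1P[-> | DF] i Ci Di.
- by rewrite subxx.
- by rewrite (FL D DF) orbT.
- by rewrite (FL C CF).
- exact: lamF Ci Di.
Qed.

Lemma laminar_within_cat (T : finType) (L1 L2 : {set T}) F1 F2 :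
  [disjoint L1 & L2] -> laminar_within L1 F1 -> laminar_within L2 F2 ->
  laminar_within (L1 :|: L2) (F1 ++ F2).
Proof.
move=> L12 [FL1 lamF1] [FL2 lamF2].
have sub1 C : C \in F1 -> C \subset L1 :|: L2.
  by move/FL1/subset_trans; apply; exact: subsetUl.
have sub2 C : C \in F2 -> C \subset L1 :|: L2.
  by move/FL2/subset_trans; apply; exact: subsetUr.
have apart C D i : C \in F1 -> D \in F2 -> i \in C -> i \in D -> False.
  move=> /FL1/subsetP C1 /FL2/subsetP D2 /C1 iL1 /D2 iL2.
  by move: L12; rewrite disjoints_subset => /subsetP/(_ i iL1); rewrite inE iL2.
split=> [C | C D]; first by rewrite mem_cat => /orP[/sub1 | /sub2].
rewrite !mem_cat => /orP[C1 | C2] /orP[D1 | D2] i Ci Di.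
- exact: lamF1 Ci Di.
- by case: (apart C D i).
- by case: (apart D C i).
- exact: lamF2 Ci Di.
Qed.

Section RtreeForestInd.
Variables (P : rtree -> Prop) (Q : seq rtree -> Prop).
Hypothesis P_Leaf : forall i, P (Leaf i).
Hypothesis P_Node : forall ts, Q ts -> P (Node ts).
Hypothesis Q_nil : Q [::].
Hypothesis Q_cons : forall t ts, P t -> Q ts -> Q (t :: ts).

Fixpoint rtree_forest_ind t : P t :=
  match t with
  | Leaf i => P_Leaf i
  | Node ts => P_Node ((fix forest_ind ts : Q ts :=
      match ts with
      | [::] => Q_nil
      | u :: us => Q_cons (rtree_forest_ind u) (forest_ind us)
      end) ts)
  end.

End RtreeForestInd.

Lemma leafset_cons n t ts :
  leafset n (Node (t :: ts)) = leafset n t :|: leafset n (Node ts).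
Proof. by apply/setP=> i; rewrite !inE /= mem_cat. Qed.

Lemma clade_seq_laminar n t :
  uniq (leaves t) -> laminar_within (leafset n t) (clade_seq n t).
Proof.
(* The forest of children of a node carries the clades of the node except the
   root clade, i.e. the [behead] of its clade sequence. *)
pose forest_ok ts := uniq (leaves (Node ts)) ->
  laminar_within (leafset n (Node ts)) (behead (clade_seq n (Node ts))).
move: t; apply: (@rtree_forest_ind _ forest_ok) => [i _ | ts IH /IH | | t ts IHt IHts].
- by split.
- exact: laminar_within_cons.
- by split.
- rewrite /forest_ok /= cat_uniq => /and3P[uniq_t disj uniq_ts].
  rewrite leafset_cons; apply: laminar_within_cat; [|exact: IHt|exact: IHts].
  rewrite -setI_eq0; apply/eqP/setP=> i; rewrite !inE.
  by apply/negP=> /andP[it its]; case/hasP: disj; exists (val i).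
Qed.

Lemma clade_laminar n t : is_tree n t -> laminar (clade n t).
Proof.
case/andP=> _ /perm_uniq; rewrite iota_uniq => /(@clade_seq_laminar n) lam_t.
have [_ lamT] : laminar_within setT (setT :: clade_seq n t).
  by apply: laminar_within_cons; split=> [C _|]; [exact: subsetT | case: lam_t].
have cladeE : clade n t =i setT :: clade_seq n t by move=> C; rewrite !inE.
by move=> C D; rewrite !cladeE; exact: lamT.
Qed.

Lemma unrelated_in_both (T : finType) (Y : {set T}) (e1 e2 : rel T) :
  symmetric e1 -> transitive e1 -> symmetric e2 -> transitive e2 ->
  (exists u v, [/\ u \in Y, v \in Y & ~~ e1 u v]) ->
  (exists u v, [/\ u \in Y, v \in Y & ~~ e2 u v]) ->
  exists u v, [/\ u \in Y, v \in Y, ~~ e1 u v & ~~ e2 u v].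
Proof.
move=> sym1 tr1 sym2 tr2 [i [j [iY jY n1ij]]] [k [l [kY lY n2kl]]].
have [e2ij | n2ij] := boolP (e2 i j); last by exists i, j.
have [m [mY n2mi]] : exists m, m \in Y /\ ~~ e2 m i.
  have [e2ki | n2ki] := boolP (e2 k i); last by exists k.
  exists l; split=> //; apply: contra n2kl => e2li.
  by apply: tr2 e2ki _; rewrite sym2.
have n2mj : ~~ e2 m j by apply: contra n2mi => e2mj; apply: tr2 e2mj _; rewrite sym2.
have [e1mi | n1mi] := boolP (e1 m i); last by exists m, i.
have [e1mj | n1mj] := boolP (e1 m j); last by exists m, j.
by case/negP: n1ij; apply: tr1 e1mj; rewrite sym1.
Qed.

Section LaminarSplit.
Variables (T : finType) (Y : {set T}).
Implicit Types A : {set {set T}}.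

Definition joined (A : {set {set T}}) : rel T := fun u v =>
  (u == v) || [exists C in A, [&& ~~ (Y \subset C), u \in C & v \in C]].

Lemma joined_sym A : symmetric (joined A).
Proof.
move=> u v; rewrite /joined eq_sym; congr (_ || _).
by apply: eq_existsb => C; rewrite [(u \in C) && _]andbC.
Qed.

Lemma joined_mem A C u v :
  C \in A -> ~~ (Y \subset C) -> u \in C -> v \in C -> joined A u v.
Proof.
by move=> CA YC uC vC; apply/orP; right; apply/exists_inP; exists C; rewrite ?YC ?uC.
Qed.

Lemma joined_trans A : laminar A -> transitive (joined A).
Proof.
move=> lamA v u w /predU1P[-> // | /existsP[C /and4P[CA YC uC vC]]].
move=> /predU1P[<- | /existsP[D /and4P[DA YD vD wD]]].
  exact: joined_mem CA YC uC vC.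
case/orP: (lamA _ _ CA DA _ vC vD) => [/subsetP CD | /subsetP DC].
  exact: joined_mem DA YD (CD u uC) wD.
exact: joined_mem CA YC uC (DC w wD).
Qed.

Lemma laminar_unjoined A : laminar A -> 1 < #|Y| ->
  exists u v, [/\ u \in Y, v \in Y & ~~ joined A u v].
Proof.
move=> lamA /card_gt1P[i [j [iY jY ij]]].
have [/forall_inP all_joined | ] := boolP [forall k in Y, joined A i k]; last first.
  by rewrite negb_forall_in => /exists_inP[k kY nik]; exists i, k.
pose P C := [&& C \in A, ~~ (Y \subset C) & i \in C].
have [C0 PC0] : exists C0, P C0.
  have /predU1P[ij_eq | /exists_inP[C CA /and3P[YC iC _]]] := all_joined j jY.
    by rewrite ij_eq eqxx in ij.
  by exists C; rewrite /P CA YC iC.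
have [C /maxsetP[/and3P[CA YC iC] maxC] _] := maxset_exists PC0.
case/negP: YC; apply/subsetP=> k kY.
have /predU1P[<- // | /exists_inP[D DA /and3P[YD iD kD]]] := all_joined k kY.
case/orP: (lamA _ _ CA DA _ iC iD) => [CD | /subsetP DC]; last exact: DC.
by rewrite -(maxC D) //; rewrite /P DA YD iD.
Qed.

End LaminarSplit.

Lemma laminar2_cover (T : finType) (A B : {set {set T}}) (Y : {set T}) :
  laminar A -> laminar B -> 1 < #|Y| ->
  exists u v, [/\ u \in Y, v \in Y, u != v &
    forall C, C \in A :|: B -> u \in C -> v \in C -> Y \subset C].
Proof.
move=> lamA lamB Y2.
have [u [v [uY vY nAuv nBuv]]] := unrelated_in_both (joined_sym Y A)
  (joined_trans lamA) (joined_sym Y B) (joined_trans lamB)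
  (laminar_unjoined lamA Y2) (laminar_unjoined lamB Y2).
exists u, v; split=> //; first by apply: contraNneq nAuv => ->; rewrite /joined eqxx.
move=> C CAB uC vC; apply/negPn/negP => YC.
case/setUP: CAB => [CA | CB].
  by case/negP: nAuv; exact: joined_mem CA YC uC vC.
by case/negP: nBuv; exact: joined_mem CB YC uC vC.
Qed.

Lemma TP_pair_cover n (S : {set {set 'I_n}}) (Y : {set 'I_n}) : TP S -> 1 < #|Y| ->
  exists p, [/\ is_pair p, p \subset Y & forall C, C \in S -> p \subset C -> Y \subset C].
Proof.
case=> T1 [T2 [/clade_laminar lam1 /clade_laminar lam2 ->]] Y2.
have [u [v [uY vY uv coverY]]] := laminar2_cover lam1 lam2 Y2.
exists [set u; v]; split; first by rewrite /is_pair cards2 uv.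
  by rewrite subUset !sub1set uY vY.
by move=> C CS; rewrite subUset !sub1set => /andP[uC vC]; exact: coverY.
Qed.

Local Open Scope ring_scope.

Lemma eq_of_superset_sums (T : finType) (R : zmodType) (P : pred {set T})
    (f g : {set T} -> R) :
  (forall C D : {set T}, C \subset D -> P C -> P D) ->
  (forall C : {set T}, P C ->
     \sum_(D : {set T} | C \subset D) f D = \sum_(D : {set T} | C \subset D) g D) ->
  forall C, P C -> f C = g C.
Proof.
move=> P_up sumsE C; elim: {C}#|~: C|.+1 {-2}C (ltnSn #|~: C|) => // m IH C CCm PC.
have sum_eq : \sum_(D : {set T} | (C \subset D) && (D != C)) f D
            = \sum_(D : {set T} | (C \subset D) && (D != C)) g D.
  apply: eq_bigr => D /andP[CD DC]; apply: IH; last exact: P_up CD PC.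
  have ltCD : C \proper D by rewrite properEneq eq_sym DC.
  by rewrite -ltnS (leq_trans _ CCm) // ltnS proper_card // properC.
have := sumsE C PC; rewrite (bigD1 C) //= [X in _ = X](bigD1 C) //= sum_eq.
exact: addIr.
Qed.

Section Load.
Variables (R : numDomainType) (n : nat).
Implicit Types (S T : {set {set 'I_n}}) (a : {set 'I_n} -> R) (C Y p : {set 'I_n}).

Definition restrict S a C : R := if C \in Sint S then a C else 0.

Definition load S a Y : R := \sum_(C : {set 'I_n} | Y \subset C) restrict S a C.

Definition cone_rep S (x : {set 'I_n} -> R) (t : R) a :=
  (forall C, C \in Sint S -> 0 <= a C) /\ forall p, is_pair p -> x p = t - load S a p.

Definition pair_max (x : {set 'I_n} -> R) Y (m : R) :=
  (exists2 p, is_pair p && (p \subset Y) & x p = m) /\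
  forall p, is_pair p -> p \subset Y -> x p <= m.

Lemma pair_max_unique x Y m m' : pair_max x Y m -> pair_max x Y m' -> m = m'.
Proof.
move=> [[p /andP[pp pY] <-] max_m] [[p' /andP[pp' p'Y] <-] max_m'].
by apply/le_anti; rewrite max_m' ?max_m.
Qed.

Lemma restrict_ge0 S a C : (forall D, D \in Sint S -> 0 <= a D) -> 0 <= restrict S a C.
Proof. by rewrite /restrict; case: ifP => // CS /(_ C CS). Qed.

Lemma load_setT S a : load S a setT = 0.
Proof. by apply: big1 => C; rewrite subTset => /eqP->; rewrite /restrict !inE eqxx. Qed.

Lemma load_le S a p Y : (forall C, C \in Sint S -> 0 <= a C) -> p \subset Y ->
  load S a Y <= load S a p.
Proof.
move=> a_ge0 pY; rewrite /load [X in _ <= X](bigID (fun C => Y \subset C)) /=.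
have -> : \sum_(C : {set 'I_n} | (p \subset C) && (Y \subset C)) restrict S a C
        = \sum_(C : {set 'I_n} | Y \subset C) restrict S a C.
  by apply: eq_bigl => C; apply/andb_idl/(subset_trans pY).
by rewrite lerDl sumr_ge0 // => C _; exact: restrict_ge0.
Qed.

Lemma load_cover S a p Y : p \subset Y ->
  (forall C, C \in S -> p \subset C -> Y \subset C) -> load S a p = load S a Y.
Proof.
move=> pY coverY; rewrite /load [LHS]big_mkcond [RHS]big_mkcond; apply: eq_bigr => C _.
rewrite /restrict; case CS: (C \in Sint S); last by rewrite !if_same.
have CS' : C \in S by move: CS; rewrite in_setD1 => /andP[].
suff -> : (p \subset C) = (Y \subset C) by [].
by apply/idP/idP => [/(coverY C CS') | /(subset_trans pY)].
Qed.

Lemma restrict_sub S T a : S \subset T -> restrict T (restrict S a) =1 restrict S a.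
Proof.
move=> ST C; rewrite /restrict; case CS: (C \in Sint S); last by rewrite if_same.
by rewrite (subsetP (setSD _ ST) C CS).
Qed.

Lemma restrict_setI S S' a b C :
  restrict S a C = restrict S' b C -> restrict (S :&: S') a C = restrict S a C.
Proof.
rewrite /restrict /Sint !in_setD1 in_setI.
by case: (C != setT) (C \in S) (C \in S') => [] [] [] //= ->.
Qed.

Lemma cone_rep_sub S T x t a :
  S \subset T -> cone_rep S x t a -> cone_rep T x t (restrict S a).
Proof.
move=> ST [a_ge0 xE]; split=> [C _ | p /xE ->]; first exact: restrict_ge0.
by congr (_ - _); apply: eq_bigr => C _; rewrite restrict_sub.
Qed.

Lemma cone_rep_pair_max S x t a Y : TP S -> cone_rep S x t a -> (1 < #|Y|)%N ->
  pair_max x Y (t - load S a Y).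
Proof.
move=> TPS [a_ge0 xE] Y2; have [p [pp pY coverY]] := TP_pair_cover TPS Y2.
split=> [|q qq qY]; first by exists p; rewrite ?pp ?pY // xE // (load_cover _ pY coverY).
by rewrite xE // lerD2l lerN2; apply: load_le.
Qed.

Lemma cone_rep_setI S S' x t a t' b : TP S -> TP S' ->
  cone_rep S x t a -> cone_rep S' x t' b -> cone_rep (S :&: S') x t a.
Proof.
move=> TPS TPS' repS repS'; have [a_ge0 xE] := repS.
have maxE Y : (1 < #|Y|)%N -> t - load S a Y = t' - load S' b Y.
  move=> Y2; exact: pair_max_unique (cone_rep_pair_max TPS repS Y2)
                                    (cone_rep_pair_max TPS' repS' Y2).
split=> [C /(subsetP (setSD _ (subsetIl S S'))) | p pp]; first exact: a_ge0.
have n2 : (1 < #|[set: 'I_n]|)%N by rewrite -(eqP pp) subset_leq_card ?subsetT.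
have tt' : t = t' by have := maxE _ n2; rewrite !load_setT !subr0.
have restrictE C : (1 < #|C|)%N -> restrict S a C = restrict S' b C.
  apply: (@eq_of_superset_sums _ _ (fun C => 1 < #|C|)%N) => [C1 C2 | Y Y2].
    by move/subset_leq_card/(leq_trans _); apply.
  by apply/oppr_inj/(addrI t); rewrite [in RHS]tt' maxE.
rewrite xE //; congr (_ - _); apply: eq_bigr => C pC.
by apply/esym/restrict_setI/restrictE; rewrite -(eqP pp) subset_leq_card.
Qed.

End Load.

Lemma cone_sum_load (R : realType) n (S : {set {set 'I_n}}) (a : {set 'I_n} -> R) p :
  \sum_(C in Sint S) a C * vC R C p = load S a p.
Proof.
rewrite /load big_mkcond [RHS]big_mkcond; apply: eq_bigr => C _.
by rewrite /restrict /vC; case: (C \in Sint S); case: (p \subset C); rewrite ?mulr1 ?mulr0.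
Qed.

Lemma inKE (R : realType) n (S : {set {set 'I_n}}) (x : {set 'I_n} -> R) :
  inK S x <-> exists t a, cone_rep S x t a.
Proof.
by split=> -[t [a [a_ge0 xE]]]; exists t, a; split=> // p /xE; rewrite cone_sum_load.
Qed.

Theorem proposition3p13 (R : realType) (n : nat) (S S' : {set {set 'I_n}}) :
  TP S -> TP S' ->
  forall x : {set 'I_n} -> R,
    (inK S x /\ inK S' x) <-> inK (S :&: S') x.
Proof.
move=> TPS TPS' x; split=> [[/inKE[t [a repS]] /inKE[t' [b repS']]] | /inKE[t [a rep]]].
  by apply/inKE; exists t, a; exact: cone_rep_setI TPS TPS' repS repS'.
split; apply/inKE; exists t, (restrict (S :&: S') a); apply: cone_rep_sub rep.
  exact: subsetIl.
exact: subsetIr.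
Qed.
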